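(* Let $n\ge1$, $q$ an indeterminate, $\mathcal F^n$ the Fock space with basis $|\lambda\rangle$ and dual basis $\langle\lambda|$ described in the context, with $z=1$, $Q^+(v)=\sum_r v^rQ^+_r$ the $Q^+$-operator, and $\tilde\beta_j(v)=Q^+(v)\beta_jQ^+(v)^{-1}=\sum_{b\ge0}v^b\tilde\beta_{j,b}$, $\tilde\beta^*_j(v)=Q^+(v)\beta^*_jQ^+(v)^{-1}=\sum_{b\ge0}v^b\tilde\beta^*_{j,b}$. Then for all $r\ge0$, all $j\in\{1,\dots,n\}$ and all partitions $\lambda,\mu$ with at most $n$ parts, $$\sum_{a+b=r}\sum_{\rho}(-1)^aN^{\tilde\rho}_{(a)\tilde\mu}(q)\,\langle\lambda|\tilde\beta_{j,b}|\rho\rangle=(-1)^r\,N^{\tilde\lambda}_{(r)\widetilde{\beta_j\mu}}(q),$$ $$\sum_{a+b=r}\sum_{\rho}\frac{(-1)^aN^{\tilde\rho}_{(a)\tilde\mu}(q)}{1-q^{2m_j(\mu)+2}}\,\langle\lambda|\tilde\beta^*_{j,b}|\rho\rangle=(-1)^r\,N^{\tilde\lambda}_{(r)\widetilde{\beta^*_j\mu}}(q),$$ where $\rho$ ranges over partitions with at most $n$ parts.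
   Context: $(q^2)_m:=\prod_{i=1}^m(1-q^{2i})$. $\mathcal F^n$: $\mathbb C(q)$-vector space with basis $|\lambda\rangle$, $\lambda$ partitions with at most $n$ parts; $m_j(\lambda)=\lambda_j-\lambda_{j+1}$ ($\lambda_{n+1}=0$) is the multiplicity of columns of height $j$ in the Young diagram of $\lambda$. $\langle\lambda|$ is the dual basis. Operators: $\beta_j^*|\lambda\rangle=(1-q^{2m_j(\lambda)+2})|\beta_j^*\lambda\rangle$, $\beta_j|\lambda\rangle=|\beta_j\lambda\rangle$ (zero if $m_j(\lambda)=0$), $q^{N_j}|\lambda\rangle=q^{m_j(\lambda)}|\lambda\rangle$, where $\beta_j^*\lambda$ (resp. $\beta_j\lambda$) denotes the partition obtained by inserting (resp. deleting) a column of height $j$ in the Young diagram. $Q^+(v)=\sum_r v^rQ^+_r$ with $Q^+_r=(-1)^r\sum_{\alpha}z^{\alpha_n}\frac{(\beta_1^* )^{\alpha_n}(\beta_1\beta_2^* )^{\alpha_1}\cdots(\beta_{n-1}\beta_n^* )^{\alpha_{n-1}}\beta_n^{\alpha_n}}{(q^2)_{\alpha_1}\cdots(q^2)_{\alpha_n}}$, the sum over compositions $\alpha\in\mathbb Z^n_{\ge0}$ of $r$, with $z=1$; $Q^+_0=1$ so $Q^+(v)$ is invertible as a power series in $v$. For a partition $\mu$, $\tilde\mu$ denotes $\mu$ with all columns of height $n$ removed. The (2D TQFT) fusion coefficients appearing here are $N^{\tilde\rho}_{(a)\tilde\mu}(q)=(-1)^a\langle\rho|Q^+_a|\mu\rangle$.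 If $\mu$ has no column of height $j$, $N^{\tilde\lambda}_{(r)\widetilde{\beta_j\mu}}$ is read as $0$. *)

From HB Require Import structures.
From mathcomp Require Import all_boot all_order all_algebra.
From mathcomp Require Import reals complex.
Set Implicit Arguments. Unset Strict Implicit. Unset Printing Implicit Defensive.
Import Order.TTheory GRing.Theory Num.Theory.
Local Open Scope ring_scope.

Definition Cq (R : realType) := {fraction {poly R[i]}}.
Definition qq (R : realType) : Cq R := tofrac 'X.

Section Fock.
Variables (R : realType) (n : nat).
Local Notation K := (Cq R).
Local Notation q := (qq R).

(* Basis of F^n.  A partition lambda with at most n parts is encoded by    *)
(* its column multiplicities (m_1(lambda),...,m_n(lambda)),               *)
(* m_j = lambda_j - lambda_{j+1}; this is a bijection between partitions  *)
(* with at most n parts and N^n (lambda_i = sum_{j>=i} m_j).  The         *)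
(* component i : 'I_n stores m_{i+1}.                                     *)
Definition part := {ffun 'I_n -> nat}.

(* m_j(lambda) for a 1-based height j (0 if j is out of range). *)
Definition mult (lam : part) (j : nat) : nat :=
  if @insub nat (fun k => k < n)%N _ j.-1 is Some i then lam i else 0%N.
Definition setmult (lam : part) (j k : nat) : part :=
  [ffun i : 'I_n => if (i : nat) == j.-1 then k else lam i].
Definition ins_col (j : nat) (lam : part) : part := setmult lam j (mult lam j).+1.
(* beta_j lambda : delete one column of height j (meaningful if m_j > 0). *)
Definition del_col (j : nat) (lam : part) : part := setmult lam j (mult lam j).-1.

(* Vectors of F^n: finite formal linear combinations sum c |lambda>.       *)
Definition vec := seq (K * part).
Definition coef (lam : part) (v : vec) : K := \sum_(p <- v | p.2 == lam) p.1.
Definition op := part -> vec.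
Definition apply (T : op) (v : vec) : vec :=
  flatten [seq [seq (p.1 * d.1, d.2) | d <- T p.2] | p <- v].
Definition id_op : op := fun lam => [:: (1, lam)].
Definition comp (T S : op) : op := fun lam => apply T (S lam).
Definition scale (c : K) (T : op) : op :=
  fun lam => [seq (c * d.1, d.2) | d <- T lam].
Definition opsum (l : seq op) : op := fun lam => flatten [seq T lam | T <- l].
Definition iter_op (k : nat) (T : op) : op := iter k (comp T) id_op.
Definition melt (lam : part) (T : op) (mu : part) : K := coef lam (T mu).

Definition beta_star (j : nat) : op :=
  fun lam => [:: (1 - q ^+ (2 * mult lam j + 2)%N, ins_col j lam)].
Definition beta (j : nat) : op :=
  fun lam => if mult lam j == 0%N then [::] else [:: (1, del_col j lam)].

Definition qpoch (m : nat) : K := \prod_(i < m) (1 - q ^+ (2 * i.+1)%N).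

(* For alpha : 'I_n -> nat, alpha_i (1-based). *)
Definition comp_at (r : nat) (al : {ffun 'I_n -> 'I_r.+1}) (i : nat) : nat :=
  if @insub nat (fun k => k < n)%N _ i.-1 is Some k then (al k : nat) else 0%N.

(* [beta_1-star]^{alpha_n} [beta_1 beta_2-star]^{alpha_1} ...
   [beta_{n-1} beta_n-star]^{alpha_{n-1}} beta_n^{alpha_n}, rightmost applied first *)
Definition Qterm (r : nat) (al : {ffun 'I_n -> 'I_r.+1}) : op :=
  comp (iter_op (comp_at al n) (beta_star 1))
    (comp (foldr (fun i acc =>
                    comp (iter_op (comp_at al i) (comp (beta i) (beta_star i.+1))) acc)
                 id_op (iota 1 n.-1))
          (iter_op (comp_at al n) (beta n))).

Definition compositions (r : nat) : seq {ffun 'I_n -> 'I_r.+1} :=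
  [seq al : {ffun 'I_n -> 'I_r.+1} <- enum {ffun 'I_n -> 'I_r.+1} | (\sum_(i < n) (al i : nat) == r)%N].

(* Q^+_r (with z = 1, so z^{alpha_n} = 1) *)
Definition Qplus (r : nat) : op :=
  scale ((-1) ^+ r)
    (opsum [seq scale (\prod_(i < n) qpoch (al i))^-1 (Qterm al)
           | al : {ffun 'I_n -> 'I_r.+1} <- compositions r]).

(* Coefficients of the inverse power series Q^+(v)^{-1} = sum_c v^c P_c:
   P_0 = 1, P_c = - sum_{k=1}^c Q^+_k P_{c-k}.
   Qinv_list c = [:: P_c; P_{c-1}; ...; P_0]. *)
Fixpoint Qinv_list (c : nat) : seq op :=
  match c with
  | 0 => [:: id_op]
  | c'.+1 => let l := Qinv_list c' in
      scale (-1) (opsum [seq comp (Qplus k.+1) (nth id_op l k) | k <- iota 0 c'.+1]) :: l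
  end.
Definition Qinv (c : nat) : op := head id_op (Qinv_list c).

(* Coefficient of v^b in Q^+(v) T Q^+(v)^{-1}. *)
Definition conj_coef (T : op) (b : nat) : op :=
  opsum [seq comp (Qplus a) (comp T (Qinv (b - a)%N)) | a <- iota 0 b.+1].
Definition beta_tilde (j b : nat) : op := conj_coef (beta j) b.
Definition beta_star_tilde (j b : nat) : op := conj_coef (beta_star j) b.

Definition Nfus (a : nat) (rho mu : part) : K := (-1) ^+ a * melt rho (Qplus a) mu.

(* "sum_{a=0}^r sum_rho F a rho = s", where rho ranges over all partitions
   with at most n parts: the double sum is finitely supported, and its
   value (the sum over any duplicate-free finite list containing the
   support) is s. *)
Definition fin_double_sum (r : nat) (F : nat -> part -> K) (s : K) : Prop :=
  (exists S : seq part, forall a rho, (a <= r)%N -> F a rho != 0 -> rho \in S) /\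
  (forall S : seq part, uniq S ->
     (forall a rho, (a <= r)%N -> F a rho != 0 -> rho \in S) ->
     \sum_(a < r.+1) \sum_(rho <- S) F a rho = s).

End Fock.

From Pilot Require Import Defs.
From mathcomp Require Import all_boot all_order all_algebra.
From mathcomp Require Import reals complex.
Set Implicit Arguments. Unset Strict Implicit. Unset Printing Implicit Defensive.
Import Order.TTheory GRing.Theory Num.Theory.
Local Open Scope ring_scope.

(* Both identities are the coefficient of v^r in Q^+(v) T Q^+(v)^{-1} Q^+(v) = Q^+(v) T,
   for T = beta_j and T = beta_j^*, read off between <lambda| and |mu>.  The coefficients
   of Q^+(v)^{-1} are defined by the recursion making them a right inverse of Q^+(v); since
   Q^+_0 = 1, induction on the degree shows that they are a left inverse as well.  The
   sign (-1)^a N^rho_(a)mu is <rho|Q^+_a|mu>, and beta_j^*|mu> carries the factor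
   1 - q^{2 m_j(mu) + 2}, which explains the division in the second identity. *)

Section Pairing.
Variables (R : realType) (n : nat).
Local Notation K := (Cq R).
Local Notation part := (part n).
Local Notation vec := (vec R n).
Local Notation op := (op R n).

Definition pairing (v : vec) (g : part -> K) : K := \sum_(p <- v) p.1 * g p.2.

(* Operator identities are proved on
   transposes, which reverses composition: e.g. the sum in [Qplus_Qinv] is the coefficient
   of v^k in Q^+(v) Q^+(v)^{-1}. *)
Definition adj (T : op) (g : part -> K) (x : part) : K := pairing (T x) g.

Lemma pairing_nil g : pairing [::] g = 0.
Proof. exact: big_nil. Qed.

Lemma pairing_cons p v g : pairing (p :: v) g = p.1 * g p.2 + pairing v g.
Proof. exact: big_cons. Qed.

Lemma pairing_flatten (l : seq vec) g :
  pairing (flatten l) g = \sum_(v <- l) pairing v g.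
Proof. by rewrite /pairing big_flatten. Qed.

Lemma eq_pairing v g g' : g =1 g' -> pairing v g = pairing v g'.
Proof. by move=> eq_g; apply: eq_bigr => p _; rewrite eq_g. Qed.

Lemma pairing_scalel (c : K) v g :
  pairing [seq (c * d.1, d.2) | d <- v] g = c * pairing v g.
Proof. by rewrite /pairing big_map big_distrr /=; apply: eq_bigr => p _; rewrite mulrA. Qed.

Lemma pairing_scaler (c : K) v g : pairing v (fun y => c * g y) = c * pairing v g.
Proof. by rewrite /pairing big_distrr; apply: eq_bigr => p _; rewrite mulrCA. Qed.

Lemma pairing_sumr (I : Type) (s : seq I) (P : pred I) v (h : I -> part -> K) :
  pairing v (fun y => \sum_(i <- s | P i) h i y) = \sum_(i <- s | P i) pairing v (h i).
Proof.
rewrite /pairing exchange_big /=; apply: eq_bigr => p _.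
by rewrite big_distrr.
Qed.

Lemma pairing_apply (T : op) v g : pairing (apply T v) g = pairing v (adj T g).
Proof.
rewrite /apply pairing_flatten big_map; apply: eq_bigr => p _.
by rewrite pairing_scalel.
Qed.

Lemma eq_adj T g g' : g =1 g' -> adj T g =1 adj T g'.
Proof. by move=> eq_g x; apply: eq_pairing. Qed.

Lemma adj_sumr (I : Type) (s : seq I) (P : pred I) T (h : I -> part -> K) x :
  adj T (fun y => \sum_(i <- s | P i) h i y) x = \sum_(i <- s | P i) adj T (h i) x.
Proof. exact: pairing_sumr. Qed.

Lemma adj_mulrnr T g m x : adj T (fun y => g y *+ m) x = adj T g x *+ m.
Proof.
rewrite /adj /pairing -sumrMnl; apply: eq_bigr => p _.
by rewrite mulrnAr.
Qed.

Lemma adj_id g x : adj (@id_op R n) g x = g x.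
Proof. by rewrite /adj pairing_cons pairing_nil mul1r addr0. Qed.

Lemma adj_comp (A B : op) g x : adj (Defs.comp A B) g x = adj B (adj A g) x.
Proof. exact: pairing_apply. Qed.

Lemma adj_scale (c : K) (A : op) g x : adj (Defs.scale c A) g x = c * adj A g x.
Proof. exact: pairing_scalel. Qed.

Lemma adj_opsum (l : seq op) g x : adj (opsum l) g x = \sum_(T <- l) adj T g x.
Proof. by rewrite /adj /opsum pairing_flatten big_map. Qed.

Lemma melt_adj lam T x : melt lam T x = adj T (fun y => (y == lam)%:R) x.
Proof.
rewrite /melt /coef /adj /pairing big_mkcond /=; apply: eq_bigr => p _.
by case: eqP; rewrite ?mulr1 ?mulr0.
Qed.

End Pairing.

Section TriangleSums.
Variable V : nmodType.

Lemma sum_iota0_ord m (F : nat -> V) : \sum_(a <- iota 0 m) F a = \sum_(a < m) F a.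
Proof. by rewrite -(big_mkord xpredT) /index_iota subn0. Qed.

Lemma sum_triangle_widen r (F : nat -> nat -> V) :
  \sum_(a < r.+1) \sum_(b < (r - a).+1) F a b =
  \sum_(a < r.+1) \sum_(b < r.+1) (if (a + b <= r)%N then F a b else 0).
Proof.
apply: eq_bigr => a _; rewrite (big_ord_widen r.+1) ?ltnS ?leq_subr // big_mkcond.
by apply: eq_bigr => b _; rewrite ltnS leq_subRL // -ltnS.
Qed.

Lemma exchange_sum_triangle r (F : nat -> nat -> V) :
  \sum_(a < r.+1) \sum_(b < (r - a).+1) F a b =
  \sum_(b < r.+1) \sum_(a < (r - b).+1) F a b.
Proof.
rewrite sum_triangle_widen (sum_triangle_widen r (fun b a => F a b)) exchange_big.
by apply: eq_bigr => b _; apply: eq_bigr => a _; rewrite addnC.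
Qed.

Lemma sum_ord_subn_eq0 r (F : nat -> V) :
  \sum_(a < r.+1) F a *+ (r - a == 0)%N = F r.
Proof.
under eq_bigr do rewrite mulrb.
rewrite -big_mkcond (eq_bigl (fun a : 'I_r.+1 => a == r :> nat)) ?big_ord1_eq ?ltnSn //.
by move=> a /=; rewrite subn_eq0 eqn_leq leq_ord.
Qed.

End TriangleSums.

Section QplusInverse.
Variables (R : realType) (n : nat).
Local Notation op := (op R n).
Local Notation Q := (@Qplus R n).
Local Notation P := (@Qinv R n).

Lemma Qinv0 : P 0 = @id_op R n.
Proof. by []. Qed.

Lemma nth_Qinv_list c k : (k <= c)%N -> nth (@id_op R n) (Qinv_list R n c) k = P (c - k).
Proof. by elim: c k => [|c IH] [|k] //= le_kc; rewrite IH. Qed.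

Lemma adj_QinvS c g x :
  adj (P c.+1) g x = - \sum_(k < c.+1) adj (P (c - k)) (adj (Q k.+1) g) x.
Proof.
rewrite {1}/Qinv; cbn [Qinv_list head]; rewrite adj_scale adj_opsum big_map mulN1r.
rewrite sum_iota0_ord; congr (- _).
by apply: eq_bigr => k _; rewrite adj_comp nth_Qinv_list // -ltnS.
Qed.

Lemma adj_Qplus0 g x : adj (Q 0) g x = g x.
Proof.
pose al0 : {ffun 'I_n -> 'I_1} := [ffun=> ord0].
have enum_al0 : enum {ffun 'I_n -> 'I_1} = [:: al0].
  have : size (enum {ffun 'I_n -> 'I_1}) = 1%N.
    by rewrite -cardE card_ffun card_ord exp1n.
  case: (enum _) => [|al [|]] // _.
  by congr [:: _]; apply/ffunP => i; rewrite ffunE ord1.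
have comp_at_al0 i : comp_at al0 i = 0%N.
  by rewrite /comp_at; case: insub => // k; rewrite ffunE.
rewrite /Qplus /compositions enum_al0 /= big1 => [|i _]; last by rewrite ffunE.
rewrite adj_scale expr0 mul1r adj_opsum big_seq1 adj_scale.
rewrite big1 ?invr1 ?mul1r => [|i _]; last by rewrite ffunE /qpoch big_ord0.
rewrite /Qterm !comp_at_al0 !adj_comp adj_id (eq_adj _ (adj_id g)).
elim: (iota 1 n.-1) x => [|i s IH] x /=; first exact: adj_id.
by rewrite adj_comp comp_at_al0 -IH; apply: eq_adj => y; rewrite adj_id.
Qed.

Lemma Qplus_Qinv k g x :
  \sum_(a < k.+1) adj (P (k - a)) (adj (Q a) g) x = g x *+ (k == 0%N).
Proof.
case: k => [|c]; first by rewrite big_ord1 Qinv0 adj_id adj_Qplus0.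
rewrite big_ord_recl subn0 (eq_adj _ (adj_Qplus0 g)) adj_QinvS.
under [X in _ + X]eq_bigr => i _ do rewrite lift0 subSS.
by rewrite addNr.
Qed.

Lemma sum_Qplus_Qinv_Qplus k g x :
  \sum_(a < k.+1) \sum_(b < (k - a).+1) adj (Q b) (adj (P (k - a - b)) (adj (Q a) g)) x
  = adj (Q k) g x.
Proof.
rewrite (exchange_sum_triangle k
  (fun a b => adj (Q b) (adj (P (k - a - b)) (adj (Q a) g)) x)) /=.
rewrite -[RHS](sum_ord_subn_eq0 k (fun b => adj (Q b) g x)).
apply: eq_bigr => b _; rewrite -adj_sumr -adj_mulrnr; apply: eq_adj => y.
by under eq_bigr => a _ do rewrite subnAC; rewrite Qplus_Qinv.
Qed.

Lemma Qinv_Qplus k g x :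
  \sum_(a < k.+1) adj (Q a) (adj (P (k - a)) g) x = g x *+ (k == 0%N).
Proof.
elim/ltn_ind: k g x => -[|c] IH g x; first by rewrite big_ord1 adj_Qplus0 Qinv0 adj_id.
have := sum_Qplus_Qinv_Qplus c.+1 g x.
rewrite big_ord_recl subn0.
under eq_bigr => b _ do rewrite (eq_adj _ (eq_adj _ (adj_Qplus0 g))).
under [X in _ + X]eq_bigr => i _ do rewrite lift0 subSS IH ?ltnS ?leq_subr //.
rewrite (sum_ord_subn_eq0 c (fun i => adj (Q i.+1) g x)) => /(canRL (addrK _)) ->.
by rewrite subrr mulr0n.
Qed.

Lemma adj_conj_coef (T : op) b g x :
  adj (conj_coef T b) g x = \sum_(a < b.+1) adj (P (b - a)) (adj T (adj (Q a) g)) x.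
Proof.
rewrite adj_opsum big_map sum_iota0_ord.
by apply: eq_bigr => a _; rewrite !adj_comp.
Qed.

Lemma conj_coef_Qplus (T : op) r g x :
  \sum_(a < r.+1) adj (Q a) (adj (conj_coef T (r - a)) g) x = adj T (adj (Q r) g) x.
Proof.
under eq_bigr => a _ do rewrite (eq_adj _ (adj_conj_coef T (r - a) g)) adj_sumr.
rewrite (exchange_sum_triangle r
  (fun a b => adj (Q a) (adj (P (r - a - b)) (adj T (adj (Q b) g))) x)) /=.
rewrite -[RHS](sum_ord_subn_eq0 r (fun b => adj T (adj (Q b) g) x)).
apply: eq_bigr => b _.
by under eq_bigr => a _ do rewrite subnAC; rewrite Qinv_Qplus.
Qed.

End QplusInverse.

Section FiniteSums.
Variables (R : realType) (n : nat).
Local Notation K := (Cq R).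
Local Notation part := (part n).
Local Notation vec := (vec R n).
Local Notation op := (op R n).
Local Notation Q := (@Qplus R n).

Lemma coef_support lam (v : vec) : coef lam v != 0 -> lam \in map snd v.
Proof.
apply: contraR => lam_v; rewrite /coef big1_seq // => p /andP [/eqP p_lam p_v].
by case/negP: lam_v; rewrite -p_lam map_f.
Qed.

Lemma sum_coef_mul_cover (v : vec) (f : part -> K) (U : seq part) :
  uniq U -> {subset map snd v <= U} ->
  \sum_(rho <- U) coef rho v * f rho = pairing v f.
Proof.
move=> uniq_U v_U.
under eq_bigr do rewrite /coef big_distrl big_mkcond /=.
rewrite exchange_big; apply: eq_big_seq => p p_v /=.
rewrite (bigD1_seq p.2) ?v_U ?map_f //= eqxx big1 ?addr0 // => rho.
by rewrite eq_sym => /negbTE ->.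
Qed.

Lemma sum_coef_mul (v : vec) (f : part -> K) (S : seq part) : uniq S ->
  (forall rho, coef rho v * f rho != 0 -> rho \in S) ->
  \sum_(rho <- S) coef rho v * f rho = pairing v f.
Proof.
move=> uniq_S S_supp; set extra := [seq rho <- undup (map snd v) | rho \notin S].
rewrite -(sum_coef_mul_cover f (U := S ++ extra)).
- rewrite big_cat /= [X in _ = _ + X]big1_seq ?addr0 // => rho /andP [_].
  rewrite mem_filter => /andP [rho_S _].
  by apply/eqP; apply: contraNT rho_S; exact: S_supp.
- rewrite cat_uniq uniq_S filter_uniq ?undup_uniq // andbT /=.
  by apply/hasPn => rho; rewrite mem_filter => /andP [].
- move=> rho rho_v; rewrite mem_cat; case rho_S: (rho \in S) => //=.
  by rewrite mem_filter rho_S mem_undup.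
Qed.

Lemma eq_fin_double_sum r (F G : nat -> part -> K) s t :
  (forall a rho, F a rho = G a rho) -> s = t ->
  fin_double_sum r G t -> fin_double_sum r F s.
Proof.
move=> eqFG -> [[S G_supp] sumG]; split.
  by exists S => a rho le_ar; rewrite eqFG; exact: G_supp.
move=> S' uniq_S' F_supp; rewrite -(sumG S' uniq_S') => [|a rho le_ar].
  by apply: eq_bigr => a _; apply: eq_bigr => rho _; rewrite eqFG.
by rewrite -eqFG; exact: F_supp.
Qed.

Lemma fin_double_sum_conj_coef (T : op) (c : K) r (lam mu : part) :
  fin_double_sum r
    (fun a rho => coef rho (Q a mu) * (c * melt lam (conj_coef T (r - a)) rho))
    (c * adj T (melt lam (Q r)) mu).
Proof.
split.
  exists (flatten [seq map snd (Q a mu) | a <- iota 0 r.+1]) => a rho le_ar.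
  rewrite mulf_eq0 negb_or => /andP [/coef_support rho_a _].
  apply/flattenP; exists (map snd (Q a mu)) => //.
  by apply/mapP; exists a; rewrite // mem_iota ltnS le_ar.
move=> S uniq_S S_supp.
transitivity (\sum_(a < r.+1) c * adj (Q a) (melt lam (conj_coef T (r - a))) mu).
  apply: eq_bigr => a _; rewrite sum_coef_mul // ?pairing_scaler // => rho.
  by apply: S_supp; rewrite -ltnS.
rewrite -big_distrr /=; congr (c * _).
under eq_bigr => a _ do rewrite (eq_adj _ (melt_adj lam _)).
by rewrite conj_coef_Qplus; apply: eq_adj => y; rewrite melt_adj.
Qed.

End FiniteSums.

Section BetaOperators.
Variables (R : realType) (n : nat).
Local Notation part := (part n).

Lemma one_sub_qX_neq0 m : (0 < m)%N -> 1 - qq R ^+ m != 0.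
Proof.
move=> m_gt0; have -> : 1 - qq R ^+ m = tofrac (1 - 'X^m : {poly R[i]}).
  by rewrite rmorphB rmorph1 rmorphXn.
rewrite tofrac_eq0 subr_eq0.
apply/eqP => /(congr1 (fun p : {poly R[i]} => size p)).
rewrite size_poly1 size_polyXn.
by case: m m_gt0.
Qed.

Lemma adj_beta j g (mu : part) :
  adj (beta R j) g mu = if mult mu j == 0%N then 0 else g (del_col j mu).
Proof.
rewrite /adj /beta; case: eqP => _; first exact: pairing_nil.
by rewrite pairing_cons pairing_nil mul1r addr0.
Qed.

Lemma adj_beta_star j g (mu : part) :
  adj (beta_star R j) g mu = (1 - qq R ^+ (2 * mult mu j + 2)) * g (ins_col j mu).
Proof. by rewrite /adj pairing_cons pairing_nil addr0. Qed.

Lemma signr_Nfus a (rho mu : part) : (-1) ^+ a * Nfus R a rho mu = coef rho (Qplus R a mu).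
Proof. by rewrite /Nfus signrMK. Qed.

End BetaOperators.

Theorem mainTheorem2 (R : realType) (n : nat) (hn : (1 <= n)%N)
  (r j : nat) (hj : (1 <= j <= n)%N) (lam mu : part n) :
  fin_double_sum r
    (fun a rho => (-1) ^+ a * Nfus R a rho mu * melt lam (beta_tilde R j (r - a)%N) rho)
    ((-1) ^+ r * (if mult mu j == 0%N then 0 else Nfus R r lam (del_col j mu)))
  /\
  fin_double_sum r
    (fun a rho => (-1) ^+ a * Nfus R a rho mu / (1 - qq R ^+ (2 * mult mu j + 2)%N)
                  * melt lam (beta_star_tilde R j (r - a)%N) rho)
    ((-1) ^+ r * Nfus R r lam (ins_col j mu)).
Proof.
(* Any operator can replace beta_j and beta_j^* here. *)
set c := 1 - qq R ^+ (2 * mult mu j + 2).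
have c_neq0 : c != 0 by rewrite one_sub_qX_neq0 // addn2.
split.
  apply: (eq_fin_double_sum _ _ (fin_double_sum_conj_coef (beta R j) 1 r lam mu)).
    by move=> a rho; rewrite signr_Nfus mul1r.
  rewrite mul1r adj_beta; case: eqP => _; first by rewrite mulr0.
  exact: signr_Nfus.
apply: (eq_fin_double_sum _ _ (fin_double_sum_conj_coef (beta_star R j) c^-1 r lam mu)).
  by move=> a rho; rewrite signr_Nfus mulrA.
by rewrite adj_beta_star mulKf // signr_Nfus.
Qed.
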